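(* Let $f(x)\in\mathbb C[x]$ be nonzero with $f(0)\ne0$. Then $f(x^m)$ divides $f(x^n)$ in $\mathbb C[x]$ whenever $m\mid n$ if and only if $f(x)$ is a nonzero constant multiple of $\operatorname{lcm}_{m\ge1}(x^m-1)^{h_m}$ (lcm in $\mathbb C[x]$) for some integers $h_m\ge0$, only finitely many of which are nonzero. *)

(* Complex numbers are modelled as R[i] (mathcomp-real-closed
   `complex`) over an arbitrary R : realType (a complete archimedean ordered
   field, i.e. a model of the reals). *)
From HB Require Import structures.
From mathcomp Require Import all_boot all_order all_algebra.
From mathcomp Require Import complex.
From mathcomp Require Import reals.
Set Implicit Arguments. Unset Strict Implicit. Unset Printing Implicit Defensive.
Import Order.TTheory GRing.Theory Num.Theory.
Local Open Scope ring_scope.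

Definition is_lcm_pos (F : fieldType) (g : nat -> {poly F}) (L : {poly F}) : Prop :=
  (forall m : nat, (0 < m)%N -> g m %| L) /\
  (forall M : {poly F}, (forall m : nat, (0 < m)%N -> g m %| M) -> L %| M).

From HB Require Import structures.
From mathcomp Require Import all_boot all_order all_algebra.
From mathcomp Require Import complex.
From mathcomp Require Import reals.
Import Order.TTheory GRing.Theory Num.Theory.
Local Open Scope ring_scope.
Set Implicit Arguments. Unset Strict Implicit. Unset Printing Implicit Defensive.

(* If [f %| f \Po 'X^j] for all [j > 0], then root multiplicities can only grow
   along [a, a^2, a^3, ...]; as [f] has finitely many roots, every root [a] is a
   root of unity, of order [d] say, and all [d]-th roots of unity are roots of
   [f] of multiplicity at least [mup a f].  Hence [('X^d - 1) ^+ mup a f]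
   divides [f], which makes [f] the lcm of the family
   [('X^m - 1) ^+ h m], [h m] being the multiplicity of [X^m - 1] in [f].
   Conversely each [X^m - 1] divides [X^(m k) - 1], so an lcm [L] of such a
   family divides [L \Po 'X^k]. *)

Section Multiplicity.
Variable F : fieldType.
Implicit Types (p q : {poly F}) (a : F).

Lemma mup_dvdp a p q : q != 0 -> p %| q -> (mup a p <= mup a q)%N.
Proof.
move=> q_neq0 pq; have p_neq0 : p != 0 by apply: contraNneq q_neq0 => p0; rewrite -dvd0p -p0.
by rewrite mup_geq // (dvdp_trans _ pq) // -mup_geq.
Qed.

Lemma mupXn a p n : p != 0 -> mup a (p ^+ n) = (mup a p * n)%N.
Proof.
move=> p_neq0; elim: n => [|n IHn]; first by rewrite expr0 muln0 mupNroot ?root1.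
by rewrite exprS mupM ?expf_neq0 // IHn mulnS.
Qed.

(* [X^j - a^j] has the simple root [a]: the cofactor of [X - a] takes the value
   [j * a^(j-1)] at [a]. *)
Lemma mup_XnsubC a j : a != 0 -> j%:R != 0 :> F ->
  mup a ('X^j - (a ^+ j)%:P) = 1%N.
Proof.
move=> a_neq0 j_neq0; have j_gt0 : (0 < j)%N by case: j j_neq0; rewrite ?eqxx.
rewrite (rmorphXn polyC) subrXX mupMl; first by rewrite (@mup_XsubCX F 1) eqxx.
have cofactor_at_a : \sum_(i < j) ('X ^+ (j.-1 - i) * a%:P ^+ i).[a] = a ^+ j.-1 *+ j.
  rewrite -[j in _ *+ j]card_ord -sumr_const; apply: eq_bigr => i _.
  rewrite hornerM horner_exp hornerX -(rmorphXn polyC) hornerC -exprD subnK //.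
  by rewrite -ltnS prednK.
rewrite /root horner_sum cofactor_at_a -mulr_natr mulf_eq0 negb_or j_neq0.
by rewrite expf_neq0.
Qed.

Lemma mup_comp_Xn a q j : a != 0 -> j%:R != 0 :> F -> q != 0 ->
  mup a (q \Po 'X^j) = mup (a ^+ j) q.
Proof.
move=> a_neq0 j_neq0 q_neq0; have j_gt0 : (0 < j)%N by case: j j_neq0; rewrite ?eqxx.
have [k [g]] := multiplicity_XsubC q (a ^+ j); rewrite q_neq0 /= => g_aj ->.
have Xj_aj_neq0 : 'X^j - (a ^+ j)%:P != 0 by rewrite -size_poly_eq0 size_XnsubC.
rewrite mupMr // mup_XsubCX eqxx comp_polyM rmorphXn /=.
rewrite comp_polyB comp_polyX comp_polyC mupMr; last first.
  by rewrite /root horner_comp hornerXn.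
by rewrite mupXn // mup_XnsubC // mul1n.
Qed.

End Multiplicity.

Lemma root_expr_unity (R : idomainType) (f : {poly R}) (a : R) :
  f != 0 -> a != 0 -> (forall j, (0 < j)%N -> root f (a ^+ j)) ->
  exists2 d, (0 < d)%N & a ^+ d = 1.
Proof.
move=> f_neq0 a_neq0 roots_f.
pose s := [seq a ^+ i.+1 | i <- iota 0 (size f)].
have /(uniqPn 0) [i [j [lt_ij]]] : ~~ uniq s.
  apply/negP => uniq_s.
  have all_roots : all (root f) s by apply/allP => _ /mapP [i _ ->]; apply: roots_f.
  by have := max_poly_roots f_neq0 all_roots uniq_s; rewrite size_map size_iota ltnn.
rewrite size_map size_iota => lt_j_size.
rewrite !(nth_map 0%N) ?size_iota ?(ltn_trans lt_ij) //.
rewrite !nth_iota ?(ltn_trans lt_ij) // !add0n => eq_ai_aj.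
exists (j - i)%N; first by rewrite subn_gt0.
apply: (@mulfI _ (a ^+ i.+1)); first by rewrite expf_neq0.
by rewrite -exprD mulr1 addSn subnKC ?eq_ai_aj // ltnW.
Qed.

Section XnSub1Multiplicity.
Variable F : fieldType.
Implicit Types f : {poly F}.

Lemma size_Xn_sub1 m : (0 < m)%N -> size ('X^m - 1 : {poly F}) = m.+1.
Proof. by move=> m_gt0; rewrite -polyC1 size_XnsubC. Qed.

Lemma dvdp_Xn_sub1_exp_ltn f m n : f != 0 -> (0 < m)%N ->
  ('X^m - 1) ^+ n %| f -> (n < size f)%N.
Proof.
move=> f_neq0 m_gt0 /(dvdp_leq f_neq0); apply: leq_trans.
have Xm_neq0 : ('X^m - 1 : {poly F}) != 0 by rewrite -size_poly_eq0 size_Xn_sub1.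
have /prednK <- : (0 < size (('X^m - 1 : {poly F}) ^+ n))%N by rewrite size_poly_gt0 expf_neq0.
rewrite size_exp size_Xn_sub1 //=.
by rewrite ltnS -[n in (n <= _)%N]mul1n leq_mul2r m_gt0 orbT.
Qed.

(* The multiplicity of [X^m - 1] in [f], searched below the bound [size f]
   given by [dvdp_Xn_sub1_exp_ltn]; the paper's exponent [h_m]. *)
Definition mult_Xn_sub1 f m : nat :=
  [arg max_(n > (ord0 : 'I_(size f).+1) | ('X^m - 1) ^+ n %| f) n].

Lemma mult_Xn_sub1_geq f m n : f != 0 -> (0 < m)%N ->
  (n <= mult_Xn_sub1 f m)%N = (('X^m - 1) ^+ n %| f).
Proof.
move=> f_neq0 m_gt0; rewrite /mult_Xn_sub1.
case: arg_maxnP; rewrite ?expr0 ?dvd1p //= => k k_dvd k_max.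
apply/idP/idP => [le_nk|n_dvd]; first exact: dvdp_trans (dvdp_exp2l _ le_nk) k_dvd.
have lt_n_size : (n < (size f).+1)%N.
  by apply: ltnW; rewrite ltnS (dvdp_Xn_sub1_exp_ltn f_neq0 m_gt0 n_dvd).
exact: k_max (Ordinal lt_n_size) n_dvd.
Qed.

Lemma mult_Xn_sub1_eq0 f m : f != 0 -> (size f < m)%N -> mult_Xn_sub1 f m = 0%N.
Proof.
move=> f_neq0 lt_size_m; have m_gt0 : (0 < m)%N by apply: leq_ltn_trans lt_size_m.
apply/eqP; rewrite -leqn0 leqNgt mult_Xn_sub1_geq // expr1.
apply: contraTN lt_size_m => /(dvdp_leq f_neq0).
by rewrite size_Xn_sub1 // -leqNgt => /ltnW.
Qed.

Lemma dvdp_Xn_sub1_expM m k : ('X^m - 1 : {poly F}) %| 'X^(m * k) - 1.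
Proof.
have := subrXX ('X^m : {poly F}) 1 k; rewrite expr1n -exprM => ->.
exact: dvdp_mulr.
Qed.

Lemma lcm_Xn_sub1_dvdp_comp h (L : {poly F}) k :
  is_lcm_pos (fun m => ('X^m - 1) ^+ h m) L -> (0 < k)%N -> L %| L \Po 'X^k.
Proof.
case=> dvd_L lcm_L k_gt0; apply: lcm_L => m m_gt0.
apply: dvdp_trans (dvdp_comp_poly ('X^k) (dvd_L m m_gt0)).
rewrite rmorphXn /= comp_polyB comp_Xn_poly comp_polyC polyC1 -exprM.
by rewrite dvdp_exp2r // mulnC dvdp_Xn_sub1_expM.
Qed.

End XnSub1Multiplicity.

Section ClosedField.
Variable F : closedFieldType.
Implicit Types p q : {poly F}.

Lemma mup_leq_dvdp p q : p != 0 -> q != 0 ->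
  (forall x, mup x p <= mup x q)%N -> p %| q.
Proof.
elim: {p}(size p) {-2}p (leqnn (size p)) q => [|n IHn] p le_p_n q p_neq0 q_neq0 le_mup.
  by move: le_p_n; rewrite size_poly_leq0 (negPf p_neq0).
have [/closed_rootP [a root_pa]|/negPn size_p1] := boolP (size p != 1%N); last first.
  by rewrite size_poly_eq1 in size_p1; rewrite (eqp_dvdl _ size_p1) dvd1p.
have Xa_dvd_p : 'X - a%:P %| p by rewrite dvdp_XsubCl.
have Xa_dvd_q : 'X - a%:P %| q.
  by rewrite XsubC_dvd // (leq_trans _ (le_mup a)) // -XsubC_dvd.
move: le_p_n le_mup p_neq0 q_neq0.
rewrite -(divpK Xa_dvd_p) -(divpK Xa_dvd_q) => le_p_n le_mup.
rewrite !mulf_eq0 !negb_or => /andP [p'_neq0 Xa_neq0] /andP [q'_neq0 _].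
rewrite dvdp_mul2r // IHn // => [|x]; last by have := le_mup x; rewrite !mupM // leq_add2r.
by move: le_p_n; rewrite size_mul // size_XsubC addn2.
Qed.

Lemma dvdp_Xn_sub1_exp q z d e : q != 0 -> d.-primitive_root z ->
  (forall i, (i < d)%N -> e <= mup (z ^+ i) q)%N -> ('X^d - 1) ^+ e %| q.
Proof.
move=> q_neq0 prim_z le_e_mup.
have Xd_neq0 : ('X^d - 1 : {poly F}) != 0.
  by rewrite -size_poly_eq0 size_Xn_sub1 // (prim_order_gt0 prim_z).
apply: mup_leq_dvdp => [|//|x]; first by rewrite expf_neq0.
rewrite mupXn // -(factor_Xn_sub_1 prim_z).
rewrite -(big_map (fun i => z ^+ i) xpredT (fun y => 'X - y%:P)) mu_prod_XsubC.
have uniq_powers : uniq [seq z ^+ i | i <- index_iota 0 d].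
  rewrite map_inj_in_uniq ?iota_uniq // => i j.
  rewrite !mem_index_iota => lt_id lt_jd /eqP.
  by rewrite (eq_prim_root_expr prim_z) !modn_small // => /eqP.
rewrite (count_uniq_mem _ uniq_powers).
case: mapP => [[i i_in ->]|_]; last by rewrite mul0n.
by rewrite mul1n le_e_mup //; move: i_in; rewrite mem_index_iota.
Qed.

Hypothesis F_char0 : has_pchar0 F.

Section PowerInvariant.
Variable f : {poly F}.
Hypotheses (f_neq0 : f != 0) (f0_neq0 : f.[0] != 0).
Hypothesis f_dvd_comp : forall j, (0 < j)%N -> f %| f \Po 'X^j.

Let root_neq0 a : root f a -> a != 0.
Proof. by apply: contraTneq => ->; rewrite rootE. Qed.

Lemma mup_leq_mup_expr a j : (0 < j)%N -> (mup a f <= mup (a ^+ j) f)%N.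
Proof.
move=> j_gt0; have [->//|mup_a_neq0] := eqVneq (mup a f) 0%N.
have a_neq0 : a != 0 by rewrite root_neq0 // -dvdp_XsubCl XsubC_dvd // lt0n.
have j_neq0 : j%:R != 0 :> F by move/pcharf0P: F_char0 => ->; rewrite -lt0n.
rewrite -mup_comp_Xn // mup_dvdp ?f_dvd_comp //.
by rewrite comp_poly_eq0 ?size_polyXn.
Qed.

Lemma lcm_Xn_sub1_mult : is_lcm_pos (fun m => ('X^m - 1) ^+ mult_Xn_sub1 f m) f.
Proof.
split=> [m m_gt0|M dvd_M]; first by rewrite -mult_Xn_sub1_geq.
have [->|M_neq0] := eqVneq M 0; first exact: dvdp0.
apply: mup_leq_dvdp => // a; set e := mup a f.
have [->//|e_neq0] := eqVneq e 0%N.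
have root_a : root f a by rewrite -dvdp_XsubCl XsubC_dvd // lt0n.
have [d0 d0_gt0 a_d0] : exists2 d, (0 < d)%N & a ^+ d = 1.
  apply: (root_expr_unity f_neq0 (root_neq0 root_a)) => j j_gt0.
  by rewrite -dvdp_XsubCl XsubC_dvd // (leq_trans _ (mup_leq_mup_expr a j_gt0)) // lt0n.
have [d prim_a _] := prim_order_exists d0_gt0 a_d0.
have d_gt0 := prim_order_gt0 prim_a.
have le_e_mult : (e <= mult_Xn_sub1 f d)%N.
  rewrite mult_Xn_sub1_geq //; apply: (dvdp_Xn_sub1_exp f_neq0 prim_a) => i _.
  have -> : a ^+ i = a ^+ (i + d) by rewrite exprD (prim_expr_order prim_a) mulr1.
  by rewrite mup_leq_mup_expr // addn_gt0 d_gt0 orbT.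
have Xa_dvd_Xd : 'X - a%:P %| 'X^d - 1.
  by rewrite dvdp_XsubCl rootE !hornerE (prim_expr_order prim_a) subrr.
rewrite mup_geq //; apply: dvdp_trans (dvdp_exp2r e Xa_dvd_Xd) _.
exact: dvdp_trans (dvdp_exp2l _ le_e_mult) (dvd_M d d_gt0).
Qed.

End PowerInvariant.

End ClosedField.

Theorem proposition1 (R : realType) (f : {poly R[i]}) :
  f != 0 -> f.[0] != 0 ->
  ((forall m n : nat, (0 < m)%N -> (0 < n)%N -> (m %| n)%N ->
      (f \Po 'X^m) %| (f \Po 'X^n)) <->
   (exists h : nat -> nat,
      (exists N : nat, forall m : nat, (N < m)%N -> h m = 0%N) /\
      exists (c : R[i]) (L : {poly R[i]}),
        c != 0 /\ is_lcm_pos (fun m => ('X^m - 1) ^+ h m) L /\ f = c *: L)).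
Proof.
move=> f_neq0 f0_neq0; split=> [dvd_comp|[h [_ [c [L [c_neq0 [lcm_L ->]]]]]]].
  exists (mult_Xn_sub1 f); split; first by exists (size f) => m; apply: mult_Xn_sub1_eq0.
  exists 1, f; split; first exact: oner_neq0.
  rewrite scale1r; split=> //; apply: lcm_Xn_sub1_mult => // [|j j_gt0].
    exact: pchar_num.
  by have := dvd_comp 1%N j isT j_gt0 (dvd1n j); rewrite comp_polyXr.
move=> m n m_gt0 n_gt0 /dvdnP [k n_km].
have k_gt0 : (0 < k)%N by move: n_gt0; rewrite n_km muln_gt0 => /andP [].
rewrite !comp_polyZ dvdpZl // dvdpZr //.
have := dvdp_comp_poly ('X^m) (lcm_Xn_sub1_dvdp_comp lcm_L k_gt0).
by rewrite -comp_polyA comp_Xn_poly -exprM mulnC n_km.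
Qed.
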